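(* Let $\varphi$ be a Boolean formula in 3-CNF and let $G$ be the graph constructed from $\varphi$ as described in the context. Let $X\subseteq V(G)$ be a minimum cluster deletion set of $G$. Then, for every clause gadget of $G$ (i.e., every $i\in\{1,\dots,m\}$), $X$ contains all vertices of two of the three sides $S_{1,i},S_{2,i},S_{3,i}$ and none of the vertices of the third side.
   Context: Let $\varphi$ consist of clauses $C_1,\dots,C_m$ over variables $x_1,\dots,x_n$, each clause containing exactly three literals, $C_i=(L_i^1\vee L_i^2\vee L_i^3)$. The graph $G$ has vertex set $\{u_{r,s,i}: r\in\{1,2,3\}, s\in\{1,\dots,7\}, i\in\{1,\dots,m\}\}\cup\{v_{r,s,j}: r\in\{1,2\}, s\in\{1,2,3\}, j\in\{1,\dots,n\}\}$ and edge set consisting of: $\{u_{r,s,i},u_{r',s',i}\}$ for all $r\ne r'$ in $\{1,2,3\}$, all $s,s'\in\{1,\dots,7\}$, all $i$; $\{v_{1,s,j},v_{2,s',j}\}$ for all $s,s'\in\{1,2,3\}$, all $j$; $\{u_{r,s,i},v_{1,s',j}\}$ for all $s\in\{1,\dots,7\}$, $s'\in\{1,2,3\}$ whenever $L_i^r = x_j$; and $\{u_{r,s,i},v_{2,s',j}\}$ for all $s\in\{1,\dots,7\}$, $s'\in\{1,2,3\}$ whenever $L_i^r=\neg x_j$. The clause gadget of $C_i$ is the complete tripartite graph on $\{u_{r,s,i}\}$ with sides $S_{r,i}=\{u_{r,s,i}: s\in\{1,\dots,7\}\}$, $r=1,2,3$; the variable gadget of $x_j$ is the complete bipartite graph on $\{v_{r,s,j}\}$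 with sides $T_{r,j}=\{v_{r,s,j}: s\in\{1,2,3\}\}$, $r=1,2$. A cluster deletion set of $G$ is a set $X\subseteq V(G)$ such that $G-X$ contains no induced path on three vertices; it is minimum if it has the smallest possible size. *)

From mathcomp Require Import all_boot.
Set Implicit Arguments. Unset Strict Implicit. Unset Printing Implicit Defensive.

(* A 3-CNF formula with m clauses over n variables: [phi i r] is the literal
   L_i^{r+1} of clause C_{i+1}, encoded as (variable index j, polarity b),
   with b = true meaning the literal x_j and b = false meaning ~ x_j. *)
Definition cnf3 (m n : nat) := 'I_m -> 'I_3 -> 'I_n * bool.

(* Vertices: inl (r, s, i) is u_{r+1,s+1,i+1};
             inr (r, s, j) is v_{r+1,s+1,j+1}. *)
Definition vtx (m n : nat) : finType :=
  (('I_3 * 'I_7 * 'I_m) + ('I_2 * 'I_3 * 'I_n))%type.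

(* the variable side attached to a literal: v_1 (r = 0) for x_j, v_2 (r = 1) for ~x_j *)
Definition lit_side (b : bool) : nat := if b then 0 else 1.

Definition uv_adj m n (phi : cnf3 m n) (a : 'I_3 * 'I_7 * 'I_m) (b : 'I_2 * 'I_3 * 'I_n) : bool :=
  ((phi a.2 a.1.1).1 == b.2) && (nat_of_ord b.1.1 == lit_side (phi a.2 a.1.1).2).

Definition adj m n (phi : cnf3 m n) : rel (vtx m n) := fun x y =>
  match x, y with
  | inl a, inl a' => (a.2 == a'.2) && (a.1.1 != a'.1.1)
  | inr b, inr b' => (b.2 == b'.2) && (b.1.1 != b'.1.1)
  | inl a, inr b => uv_adj phi a b
  | inr b, inl a => uv_adj phi a b
  end.

Definition cluster_deletion_set m n (phi : cnf3 m n) (X : {set vtx m n}) : Prop :=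
  forall x y z : vtx m n, x \notin X -> y \notin X -> z \notin X ->
    x != z -> adj phi x y -> adj phi y z -> adj phi x z.

Definition min_cluster_deletion_set m n (phi : cnf3 m n) (X : {set vtx m n}) : Prop :=
  cluster_deletion_set phi X /\
  forall Y : {set vtx m n}, cluster_deletion_set phi Y -> #|X| <= #|Y|.

Definition side m n (r : 'I_3) (i : 'I_m) : {set vtx m n} :=
  [set inl (r, s, i) | s : 'I_7].

From mathcomp Require Import all_boot.
From mathcomp Require Import zify.
Set Implicit Arguments. Unset Strict Implicit. Unset Printing Implicit Defensive.

(* All vertices of a side S_r of a clause gadget have the same neighbourhood
   N_r: the two other sides and the three vertices of the variable side
   T_{l,j} matching the literal L_i^r.  Trading X ∩ S_r for N_r \ X gives
   another cluster deletion set, so minimality yields |S_r ∩ X| <= |N_r \ X|.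
   If every side had at most one vertex outside X this would read 6 <= 2 + 3;
   hence some S_r has two (non-adjacent) vertices outside X, all their common
   neighbours N_r lie in X, and the inequality then forces S_r ∩ X = ∅. *)

Lemma card_bigcup_leq (I T : finType) (P : pred I) (F : I -> {set T}) :
  #|\bigcup_(j | P j) F j| <= \sum_(j | P j) #|F j|.
Proof.
elim/big_ind2: _ => [|a A b B hA hB|//]; first by rewrite cards0.
by apply: leq_trans (leq_card_setU A B) _; apply: leq_add.
Qed.

Section ClusterDeletion.
Variables (m n : nat) (phi : cnf3 m n).
Implicit Types X S Z : {set vtx m n}.

Lemma adj_sym : symmetric (adj phi).
Proof. by case=> [a|b] [a'|b'] //=; rewrite eq_sym [X in _ && ~~ X]eq_sym. Qed.

Lemma cds_common_nbr X u v w : cluster_deletion_set phi X ->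
  u \notin X -> v \notin X -> u != v -> ~~ adj phi u v ->
  adj phi u w -> adj phi w v -> w \in X.
Proof.
move=> cX uX vX uv nuv uw wv; apply/negPn/negP => wX.
by rewrite (cX _ _ _ uX wX vX uv uw wv) in nuv.
Qed.

Lemma cds_replace X S Z : (forall v w, v \in S -> adj phi v w -> w \in Z) ->
  cluster_deletion_set phi X -> cluster_deletion_set phi ((X :\: S) :|: Z).
Proof.
move=> closedSZ cX x y z xY yY zY xz xy yz.
have outX v w : v \notin (X :\: S) :|: Z -> w \notin (X :\: S) :|: Z ->
    adj phi v w -> v \notin X.
  move=> vY wY vw; apply/negP => vX; move: vY wY; rewrite !inE vX andbT.
  by case: (boolP (v \in S)) => [vS _|//]; rewrite (closedSZ v w vS vw) orbT.
have yx : adj phi y x by rewrite adj_sym.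
have zy : adj phi z y by rewrite adj_sym.
exact: cX (outX _ _ xY yY xy) (outX _ _ yY xY yx) (outX _ _ zY yY zy) xz xy yz.
Qed.

Lemma min_cds_card_le X S Z : min_cluster_deletion_set phi X ->
  (forall v w, v \in S -> adj phi v w -> w \in Z) -> [disjoint S & Z] ->
  #|S :&: X| <= #|Z :\: X|.
Proof.
move=> [cX minX] closedSZ disjSZ.
have := minX _ (cds_replace closedSZ cX).
have -> : (X :\: S) :|: Z = (X :\: S) :|: (Z :\: X).
  apply/setP => w; rewrite !inE; case: (boolP (w \in Z)) => wZ; last by rewrite andbF.
  by rewrite (disjointFl disjSZ wZ) orbT andbT; case: (w \in X).
have [cardU _] := leq_card_setU (X :\: S) (Z :\: X); have := cardsID S X.
rewrite setIC; lia.
Qed.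

End ClusterDeletion.

Section ClauseGadget.
Variables (m n : nat) (phi : cnf3 m n) (i : 'I_m).
Implicit Types X : {set vtx m n}.

Definition lit_block (r : 'I_3) : {set vtx m n} :=
  [set inr (inord (lit_side (phi i r).2), s, (phi i r).1) | s : 'I_3].

Definition side_nbhd (r : 'I_3) : {set vtx m n} :=
  (\bigcup_(r' in [set~ r]) side n r' i) :|: lit_block r.

Lemma sideP r x : reflect (exists s, x = inl (r, s, i)) (x \in side n r i).
Proof. by apply: (iffP imsetP) => [[s _ ->]|[s ->]]; exists s. Qed.

Lemma card_side r : #|side n r i| = 7.
Proof. by rewrite card_imset ?card_ord // => s s' []. Qed.

Lemma card_lit_block r : #|lit_block r| <= 3.
Proof. by rewrite -[3](card_ord 3) leq_imset_card. Qed.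

Lemma adj_side_nbhd r s w : adj phi (inl (r, s, i)) w = (w \in side_nbhd r).
Proof.
rewrite in_setU; case: w => [[[r' s'] i']|[[l s'] j]] /=.
- rewrite [_ \in lit_block r](introF imsetP) ?orbF; last by case.
  apply/andP/bigcupP => [[/eqP <- rr']|[r'' + /sideP [_ [-> _ ->]]]].
  + by exists r'; [rewrite in_setC1 eq_sym | apply/sideP; exists s'].
  + by rewrite in_setC1 eqxx eq_sym.
- rewrite (introF bigcupP) /=; last by case=> ? _ /sideP [].
  have lit_side_lt2 b : lit_side b < 2 by case: b.
  rewrite /uv_adj /=; apply/andP/imsetP => [[/eqP <- /eqP hl]|[s'' _ [-> _ ->]]].
  + by exists s' => //; congr (inr (_, _, _)); apply: val_inj; rewrite /= inordK.
  + by rewrite eqxx inordK.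
Qed.

Lemma side_nbhd_closed r v w :
  v \in side n r i -> adj phi v w -> w \in side_nbhd r.
Proof. by case/sideP=> s ->; rewrite adj_side_nbhd. Qed.

Lemma disjoint_side_nbhd r : [disjoint side n r i & side_nbhd r].
Proof.
apply/pred0P => w /=; apply/negbTE/andP => -[/sideP [s ->]].
by rewrite -(adj_side_nbhd r s) /= !eqxx.
Qed.

Lemma side_nbhd_sub_cds X r : cluster_deletion_set phi X ->
  1 < #|side n r i :\: X| -> side_nbhd r \subset X.
Proof.
move=> cX /card_gt1P [u [v [/setDP [/sideP [s ->] uX]]]].
case=> /setDP [/sideP [s' ->] vX] uv.
apply/subsetP => w; rewrite -(adj_side_nbhd r s) => uw.
apply: (cds_common_nbr cX uX vX uv) => //=; first by rewrite !eqxx.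
by rewrite adj_sym adj_side_nbhd -(adj_side_nbhd r s).
Qed.

Lemma card_side_nbhd_setD X r :
  (forall r', #|side n r' i :\: X| <= 1) -> #|side_nbhd r :\: X| <= 5.
Proof.
move=> le1; rewrite setDUl.
have [cardU _] := leq_card_setU
  ((\bigcup_(r' in [set~ r]) side n r' i) :\: X) (lit_block r :\: X).
have : #|lit_block r :\: X| <= 3.
  exact: leq_trans (subset_leq_card (subsetDl _ _)) (card_lit_block r).
have : #|(\bigcup_(r' in [set~ r]) side n r' i) :\: X| <= 2.
  apply: leq_trans (_ : _ <= #|\bigcup_(r' in [set~ r]) (side n r' i :\: X)|) _.
    apply/subset_leq_card/subsetP => w /setDP [/bigcupP [r' r'r wS] wX].
    by apply/bigcupP; exists r' => //; apply/setDP.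
  apply: leq_trans (card_bigcup_leq _ _) _.
  apply: (@leq_trans (\sum_(r' in [set~ r]) 1)); first by apply: leq_sum.
  by rewrite sum_nat_const cardsC1 card_ord.
lia.
Qed.

Lemma exists_side_two_out X : min_cluster_deletion_set phi X ->
  exists r, 1 < #|side n r i :\: X|.
Proof.
move=> minX; apply/existsP; apply: contraT; rewrite negb_exists => /forallP none.
have le1 r : #|side n r i :\: X| <= 1 by rewrite leqNgt none.
have := min_cds_card_le minX (side_nbhd_closed (r := ord0))
  (disjoint_side_nbhd ord0).
have := card_side_nbhd_setD ord0 le1; have := cardsID X (side n ord0 i).
by rewrite card_side; have := le1 ord0; lia.
Qed.

End ClauseGadget.

Theorem lemma10 (m n : nat) (phi : cnf3 m n) (X : {set vtx m n}) :
  min_cluster_deletion_set phi X ->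
  forall i : 'I_m, exists r : 'I_3,
    [disjoint side n r i & X] /\
    (forall r' : 'I_3, r' != r -> side n r' i \subset X).
Proof.
move=> minX i.
have [r two_out] := exists_side_two_out i minX.
have nbhdX := side_nbhd_sub_cds minX.1 two_out.
exists r; split.
- have := min_cds_card_le minX (side_nbhd_closed (i := i) (r := r))
    (disjoint_side_nbhd phi i r).
  have /eqP -> : side_nbhd phi i r :\: X == set0 by rewrite setD_eq0.
  by rewrite cards0 leqn0 cards_eq0 setI_eq0.
- move=> r' r'r; apply: subset_trans nbhdX; apply: subset_trans (subsetUl _ _).
  by apply: (bigcup_sup r'); rewrite in_setC1.
Qed.
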